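(* Let $m\geq 2$ and $n\geq 2$ be integers, let $T_m$ be a tree of order $m$ and $K_n$ the complete graph of order $n$. Then $$\max\{rvc(T_m),\,n+2\}\leq rvcl(T_m\diamond K_n)\leq 2m+n-2.$$
   Context: All graphs are finite, simple, connected and undirected; $d$ denotes graph distance. A rainbow vertex $k$-coloring of $G$ is a map $c:V(G)\to\{1,\dots,k\}$ such that every two vertices are joined by a path whose internal vertices all receive distinct colors; $rvc(G)$ is the least $k$ for which $G$ has one. For such $c$ let $R_i=c^{-1}(i)$; the rainbow code of $v$ is $(d(v,R_1),\dots,d(v,R_k))$ with $d(v,R_i)=\min_{x\in R_i}d(v,x)$. A locating rainbow $k$-coloring is a rainbow vertex $k$-coloring in which distinct vertices have distinct rainbow codes; $rvcl(G)$ is the least $k$ for which one exists. For graphs $G_m$ (order $m$) and $H_n$ (order $n$) on disjoint vertex sets, the edge corona $G_m\diamond H_n$ is obtained from one copy of $G_m$ and $|E(G_m)|$ vertex-disjoint copies of $H_n$, one per edge of $G_m$, by joining both end vertices of the $j$-th edge of $G_m$ to every vertex of the $j$-th copy of $H_n$. *)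

From mathcomp Require Import all_boot.
Set Implicit Arguments. Unset Strict Implicit. Unset Printing Implicit Defensive.

Section Graphs.
Variable V : finType.

Definition simple_graph (e : rel V) : Prop := symmetric e /\ irreflexive e.

Definition connected (e : rel V) : Prop := forall u v : V, connect e u v.

Definition acyclic (e : rel V) : Prop :=
  forall c : seq V, uniq c -> 2 < size c -> ~~ cycle e c.

Definition is_tree (e : rel V) : Prop := connected e /\ acyclic e.

Definition walk_len (e : rel V) (k : nat) (u v : V) : bool :=
  [exists t : k.-tuple V, path e u t && (last u t == v)].

(* graph distance d(u,v): least length of a u-v walk (for connected graphs a
   shortest walk has length < #|V|; default #|V| is never attained then) *)
Definition dist (e : rel V) (u v : V) : nat :=
  \big[minn/#|V|]_(k < #|V| | walk_len e k u v) k.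

(* d(v,A) = min_{x in A} d(v,x)  (constant #|V| if A is empty) *)
Definition setdist (e : rel V) (v : V) (A : {set V}) : nat :=
  \big[minn/#|V|]_(x in A) dist e v x.

(* p (the vertices after u) is a u-v path whose internal vertices have
   pairwise distinct colours under c *)
Definition rainbow_path (k : nat) (e : rel V) (c : V -> 'I_k) (u v : V) (p : seq V) : bool :=
  [&& path e u p, last u p == v, uniq (u :: p) & uniq (map c (behead (belast u p)))].

(* rainbow vertex colouring: every two vertices joined by a rainbow path
   (a path has < #|V| edges, so the bounded search is exhaustive) *)
Definition rainbow_coloring (k : nat) (e : rel V) (c : V -> 'I_k) : bool :=
  [forall u, forall v, [exists l : 'I_#|V|, [exists t : l.-tuple V, rainbow_path e c u v t]]].

Definition color_class (k : nat) (c : V -> 'I_k) (i : 'I_k) : {set V} :=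
  [set x | c x == i].

Definition locating (k : nat) (e : rel V) (c : V -> 'I_k) : bool :=
  [forall u, forall v, (u != v) ==>
     [exists i, setdist e u (color_class c i) != setdist e v (color_class c i)]].

Definition has_rvc (e : rel V) (k : nat) : bool :=
  [exists c : {ffun V -> 'I_k}, rainbow_coloring e c].

Definition has_rvcl (e : rel V) (k : nat) : bool :=
  [exists c : {ffun V -> 'I_k}, rainbow_coloring e c && locating e c].

(* least k (searched in 0..#|V|, which suffices for connected graphs since an
   injective colouring works) *)
Definition rvc (e : rel V) : nat := find (has_rvc e) (iota 0 #|V|.+1).
Definition rvcl (e : rel V) : nat := find (has_rvcl e) (iota 0 #|V|.+1).

End Graphs.

Definition complete_rel (n : nat) : rel 'I_n := fun i j => i != j.
Arguments complete_rel n : clear implicits.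

Definition is_edge (V : finType) (e : rel V) (A : {set V}) : bool :=
  [exists x, [exists y, e x y && (A == [set x; y])]].

Definition edge_type (V : finType) (e : rel V) := {A : {set V} | is_edge e A}.

(* edge corona G <> H : copy of G plus one copy of H per edge of G, both
   end vertices of the edge joined to all vertices of its copy *)
Definition corona_rel (V W : finType) (e : rel V) (f : rel W) :
  rel (V + (edge_type e * W))%type :=
  fun a b => match a, b with
  | inl x, inl y => e x y
  | inr (A, w), inr (B, w') => (A == B) && f w w'
  | inl x, inr (A, _) => x \in val A
  | inr (A, _), inl x => x \in val A
  end.
Arguments corona_rel {V W} e f.

From mathcomp Require Import all_boot fingroup perm zify.
Set Implicit Arguments. Unset Strict Implicit. Unset Printing Implicit Defensive.

(* Upper bound: give the tree vertices pairwise distinct colours and the vertex of position w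
   in every copy of K_n one more colour depending only on w, m + n <= 2m + n - 2 colours in all.
   Any two vertices are joined by a walk whose inner vertices lie in the tree, and shortening it
   gives a rainbow path.  Two vertices with the same colour lie in the copies of two different
   edges, and a tree vertex on the first edge but not on the second is at distance 1 from the
   first vertex and at distance at least 2 from the second.
   Lower bounds: dropping the copy vertices from a rainbow path between tree vertices leaves a
   rainbow path of the tree, so rvc(T) <= rvcl.  For a leaf x with neighbour y, the vertex x
   and the copy of K_n on the edge xy are n + 1 pairwise twins, which a locating colouring must
   colour differently.  With only n + 1 colours, y and the clique vertex of the colour of y
   would both see every colour within distance 1, so both their codes would be the indicator
   of the complement of that colour. *)

Lemma bigminn_le_seq (I : eqType) (r : seq I) (P : pred I) (F : I -> nat) d i :
  i \in r -> P i -> \big[minn/d]_(j <- r | P j) F j <= F i.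
Proof.
elim: r => [|x r IH] //=; rewrite in_cons big_cons.
case/orP=> [/eqP<- -> | ir Pi]; first by rewrite geq_minl.
by case: (P x); rewrite ?geq_min IH ?orbT.
Qed.

Lemma leq_bigminn (I : Type) (r : seq I) (P : pred I) (F : I -> nat) d k :
  k <= d -> (forall i, P i -> k <= F i) -> k <= \big[minn/d]_(j <- r | P j) F j.
Proof.
move=> kd kF; apply: (big_ind (fun x => k <= x)) => // x y kx ky.
by rewrite leq_min kx ky.
Qed.

Section Distance.
Variables (V : finType) (r : rel V).

Lemma walk_len0 u v : walk_len r 0 u v = (u == v).
Proof.
apply/existsP/idP => [[t]|/eqP->]; first by rewrite tuple0.
by exists [tuple]; rewrite /= eqxx.
Qed.

Lemma walk_len1 u v : walk_len r 1 u v = r u v.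
Proof.
apply/existsP/idP => [[t]|ruv]; last by exists [tuple v]; rewrite /= ruv eqxx.
by case: t => [[|x [|? ?]] //= _]; rewrite andbT => /andP[? /eqP<-].
Qed.

Lemma walk_len_perm (s : {perm V}) k u v :
  {mono s : a b / r a b} -> walk_len r k (s u) (s v) = walk_len r k u v.
Proof.
have walk_homo (f : V -> V) x y : {homo f : a b / r a b} ->
    walk_len r k x y -> walk_len r k (f x) (f y).
  move=> fr /existsP[t /andP[pt /eqP <-]]; apply/existsP; exists (map_tuple f t).
  by rewrite /= (homo_path fr pt) last_map eqxx.
move=> sr; apply/idP/idP => [w|]; last by apply: walk_homo => a b; rewrite sr.
rewrite -(permK s u) -(permK s v); apply: walk_homo w => a b rab.
by rewrite -sr !permKV.
Qed.

Lemma dist_le u v k : k < #|V| -> walk_len r k u v -> dist r u v <= k.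
Proof.
move=> kV w.
exact: (@bigminn_le_seq _ _ _ (fun j : 'I_#|V| => nat_of_ord j) _ (Ordinal kV)
  (mem_index_enum _) w).
Qed.

Lemma dist_ge u v j :
  j <= #|V| -> (forall k, walk_len r k u v -> j <= k) -> j <= dist r u v.
Proof. by move=> jV jk; apply: leq_bigminn => // i; apply: jk. Qed.

Lemma distxx u : dist r u u = 0.
Proof.
apply/eqP; rewrite -leqn0 dist_le ?walk_len0 //.
by apply/card_gt0P; exists u.
Qed.

Lemma dist_gt0 u v : u != v -> 0 < dist r u v.
Proof.
move=> uv; apply: dist_ge => [|[|k] //]; last by rewrite walk_len0 (negbTE uv).
by apply/card_gt0P; exists u.
Qed.

Lemma dist_le1 u v : u != v -> r u v -> dist r u v <= 1.
Proof.
by move=> uv ruv; apply: dist_le; rewrite ?walk_len1 //; apply/card_gt1P; exists u, v.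
Qed.

Lemma dist_gt1 u v : u != v -> ~~ r u v -> 1 < dist r u v.
Proof.
move=> uv nruv; apply: dist_ge => [|[|[|k]] //]; first by apply/card_gt1P; exists u, v.
  by rewrite walk_len0 (negbTE uv).
by rewrite walk_len1 (negbTE nruv).
Qed.

Lemma dist_perm (s : {perm V}) u v :
  {mono s : a b / r a b} -> dist r (s u) (s v) = dist r u v.
Proof. by move=> sr; apply: eq_bigl => k; rewrite walk_len_perm. Qed.

Lemma setdist_le v (A : {set V}) x : x \in A -> setdist r v A <= dist r v x.
Proof. by move=> xA; apply: bigminn_le_seq; rewrite ?mem_index_enum. Qed.

Lemma setdist_ge v (A : {set V}) j :
  j <= #|V| -> (forall x, x \in A -> j <= dist r v x) -> j <= setdist r v A.
Proof. exact: leq_bigminn. Qed.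

Lemma setdist_eq0 v (A : {set V}) : (setdist r v A == 0) = (v \in A).
Proof.
apply/idP/idP => [|vA]; last by rewrite -leqn0 -(distxx v) setdist_le.
apply: contraLR => vA; rewrite -lt0n; apply: setdist_ge => [|x xA].
  by apply/card_gt0P; exists v.
by apply: dist_gt0; apply: contraNneq vA => ->.
Qed.

Lemma setdist_le1 v (A : {set V}) x : x \in A -> v != x -> r v x -> setdist r v A <= 1.
Proof. by move=> xA vx rvx; apply: leq_trans (setdist_le v xA) (dist_le1 vx rvx). Qed.

Lemma setdist_gt1 v (A : {set V}) x0 :
  x0 \in A -> (forall x, x \in A -> (v != x) && ~~ r v x) -> 1 < setdist r v A.
Proof.
move=> x0A far; apply: setdist_ge => [|x /far/andP[vx nrvx]]; last exact: dist_gt1.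
by have /andP[vx0 _] := far x0 x0A; apply/card_gt1P; exists v, x0.
Qed.

End Distance.

Section Colorings.
Variables (V : finType) (r : rel V) (k : nat) (c : V -> 'I_k).

Notation code v i := (setdist r v (color_class c i)).

Lemma mem_color_class x i : (x \in color_class c i) = (c x == i).
Proof. by rewrite inE. Qed.

Lemma locatingP :
  reflect (forall u v, u != v -> exists i, code u i != code v i) (locating r c).
Proof.
apply: (iffP forallP) => [loc u v uv | loc u].
  by have /forallP/(_ v)/implyP/(_ uv)/existsP := loc u.
by apply/forallP => v; apply/implyP => /loc/existsP.
Qed.

Lemma code_color_neq u v : c u != c v -> code u (c u) != code v (c u).
Proof.
move=> cuv; apply/eqP => codeE; have := setdist_eq0 r v (color_class c (c u)).
by rewrite -codeE setdist_eq0 !mem_color_class eqxx eq_sym (negbTE cuv).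
Qed.

Definition sees_all_colors q := forall i, exists2 z, c z = i & (z == q) || r q z.

Lemma code_sees_all q i : sees_all_colors q -> code q i = (c q != i).
Proof.
move=> allq; have [<-|ci] /= := eqVneq (c q) i.
  by apply/eqP; rewrite setdist_eq0 mem_color_class.
apply/eqP; rewrite eqn_leq lt0n setdist_eq0 mem_color_class ci andbT.
have [z cz /predU1P[zq|rqz]] := allq i; first by rewrite -zq cz eqxx in ci.
apply: (setdist_le1 (x := z)) rqz; first by rewrite mem_color_class cz.
by apply: contraNneq ci => ->; rewrite cz.
Qed.

Lemma locating_sees_all u v : locating r c -> u != v ->
  sees_all_colors u -> sees_all_colors v -> c u != c v.
Proof.
move=> /locatingP loc uv su sv; apply/eqP => cuv; have [i] := loc u v uv.
by rewrite !code_sees_all // cuv eqxx.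
Qed.

Hypotheses (r_sym : symmetric r) (r_irr : irreflexive r).

Lemma tperm_mono u v : (forall a, a != u -> a != v -> r u a = r v a) ->
  {mono tperm u v : a b / r a b}.
Proof.
move=> tw a b.
have twC z : z != u -> z != v -> r z u = r z v by move=> zu zv; rewrite r_sym tw // r_sym.
case: tpermP => [->|->|/eqP au /eqP av]; case: tpermP => [->|->|/eqP bu /eqP bv] //.
- by rewrite !r_irr.
- by rewrite tw.
- by rewrite !r_irr.
- by rewrite tw.
- by rewrite twC.
- by rewrite twC.
Qed.

Lemma locating_twins u v : locating r c -> u != v ->
  (forall a, a != u -> a != v -> r u a = r v a) -> c u != c v.
Proof.
move=> /locatingP loc uv tw; apply/eqP => cuv; have [i] := loc u v uv.
apply/negP; rewrite negbK.
have [<-|ci] := eqVneq (c u) i.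
  have code0 z : c z = c u -> code z (c u) = 0.
    by move=> cz; apply/eqP; rewrite setdist_eq0 mem_color_class cz.
  by rewrite !code0.
rewrite /setdist; apply/eqP/eq_bigr => z; rewrite mem_color_class => /eqP cz.
have zu : u != z by apply: contraNneq ci => ->; rewrite cz.
have zv : v != z by apply: contraNneq ci => vz; rewrite cuv vz cz.
by have := dist_perm u z (tperm_mono tw); rewrite tpermL tpermD.
Qed.

End Colorings.

Section Rainbow.
Variables (V : finType) (r : rel V) (k : nat).

Lemma rainbow_coloringP (c : V -> 'I_k) :
  reflect (forall u v, exists p, rainbow_path r c u v p) (rainbow_coloring r c).
Proof.
apply: (iffP forallP) => [rb u v | rb u].
  by have /forallP/(_ v)/existsP[l /existsP[t rt]] := rb u; exists t.
apply/forallP => v; have [p rp] := rb u v; have /and4P[_ _ up _] := rp.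
have lt_p : size p < #|V| by have := max_card (mem (u :: p)); rewrite (card_uniqP up).
by apply/existsP; exists (Ordinal lt_p); apply/existsP; exists (in_tuple p).
Qed.

Lemma internal_uniq (x : V) s : uniq (x :: s) -> uniq (behead (belast x s)).
Proof.
case: s => // y s; rewrite cons_uniq => /andP[_ uys] /=.
by move: uys; rewrite lastI rcons_uniq => /andP[].
Qed.

Lemma internalP (x : V) s z : uniq (x :: s) ->
  z \in behead (belast x s) -> (z \in s) && (z != last x s).
Proof.
case: s => // y s; rewrite cons_uniq => /andP[_ uys] /= zin.
have /andP[lnot _] : (last y s \notin belast y s) && uniq (belast y s).
  by rewrite -rcons_uniq -lastI.
apply/andP; split; first exact: mem_belast zin.
by apply: contraNneq lnot => <-.
Qed.

Lemma mem_internal (x : V) s z : z \in s -> z != last x s -> z \in behead (belast x s).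
Proof.
by case: s => //= y s; rewrite lastI mem_rcons in_cons => /predU1P[->|]; rewrite ?eqxx.
Qed.

Lemma rainbow_path_shorten (c : V -> 'I_k) u p : path r u p ->
  {in behead (belast u p) &, injective c} -> exists q, rainbow_path r c u (last u p) q.
Proof.
move=> pth inj; move: (erefl (last u p)).
case: {2 3}(last u p) _ / (shortenP pth) => q pq uq sub lastE.
exists q; rewrite /rainbow_path pq eqxx uq map_inj_in_uniq ?internal_uniq //.
apply: sub_in2 inj => z /(internalP uq)/andP[zq zl]; apply: mem_internal (sub _ zq) _.
by rewrite lastE.
Qed.

Lemma eq_rainbow_coloring (c1 c2 : V -> 'I_k) :
  c1 =1 c2 -> rainbow_coloring r c1 = rainbow_coloring r c2.
Proof.
move=> c12; apply: eq_forallb => u; apply: eq_forallb => v; apply: eq_existsb => l.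
by apply: eq_existsb => t; rewrite /rainbow_path (eq_map c12).
Qed.

Lemma eq_locating (c1 c2 : V -> 'I_k) : c1 =1 c2 -> locating r c1 = locating r c2.
Proof.
move=> c12; have classE i : color_class c1 i = color_class c2 i.
  by apply/setP => x; rewrite !inE c12.
by apply: eq_forallb => u; apply: eq_forallb => v; under eq_existsb do rewrite !classE.
Qed.

Lemma has_rvc_of (c : V -> 'I_k) : rainbow_coloring r c -> has_rvc r k.
Proof.
by move=> rb; apply/existsP; exists (finfun c); rewrite (eq_rainbow_coloring (ffunE c)).
Qed.

Lemma has_rvcl_of (c : V -> 'I_k) : rainbow_coloring r c -> locating r c -> has_rvcl r k.
Proof.
move=> rb loc; apply/existsP; exists (finfun c).
by rewrite (eq_rainbow_coloring (ffunE c)) (eq_locating (ffunE c)) rb.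
Qed.

End Rainbow.

Lemma find_iota_le (a : pred nat) N j : a j -> find a (iota 0 N) <= j.
Proof.
move=> aj; have [jN|Nj] := ltnP j N.
  by rewrite leqNgt; apply/negP => /(before_find 0); rewrite nth_iota // add0n aj.
by apply: leq_trans Nj; rewrite -{2}(size_iota 0 N) find_size.
Qed.

Lemma find_iotaP (a : pred nat) N : find a (iota 0 N) = N \/ a (find a (iota 0 N)).
Proof.
have := find_size a (iota 0 N); rewrite size_iota leq_eqVlt => /predU1P[->|lt_N]; first by left.
right; have := nth_find 0 (_ : has a (iota 0 N)); rewrite nth_iota // add0n; apply.
by rewrite has_find size_iota.
Qed.

Section ColoringNumbers.
Variables (V : finType) (r : rel V).

Lemma rvc_le_card : rvc r <= #|V|.+1.
Proof. by have := find_size (has_rvc r) (iota 0 #|V|.+1); rewrite size_iota. Qed.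

Lemma rvclP : rvcl r = #|V|.+1 \/ has_rvcl r (rvcl r).
Proof. exact: find_iotaP. Qed.

End ColoringNumbers.

Section Corona.
Variables (T : finType) (e : rel T) (n : nat).
Hypotheses (e_sym : symmetric e) (e_irr : irreflexive e).

Definition corona_vertex : finType := (T + (edge_type e * 'I_n))%type.
Definition corona : rel corona_vertex := corona_rel e (complete_rel n).
Definition is_inl : pred corona_vertex := fun v => if v is inl _ then true else false.

Lemma corona_sym : symmetric corona.
Proof.
by case=> [x|[A w]] [y|[B w']] //=; rewrite /complete_rel ?e_sym // eq_sym [w' == w]eq_sym.
Qed.

Lemma corona_irr : irreflexive corona.
Proof. by case=> [x|[A w]] /=; rewrite ?e_irr // /complete_rel !eqxx. Qed.

Lemma edgeP (A : edge_type e) : exists x y, e x y /\ val A = [set x; y].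
Proof. by case: A => A /= /existsP[x /existsP[y /andP[exy /eqP->]]]; exists x, y. Qed.

Lemma edge_end (A : edge_type e) : exists a, a \in val A.
Proof. by have [x [y [_ ->]]] := edgeP A; exists x; rewrite !inE eqxx. Qed.

Lemma edge_adj (A : edge_type e) x z : x \in val A -> z \in val A -> x != z -> e x z.
Proof.
have [p [q [epq ->]]] := edgeP A.
by rewrite !inE => /orP[]/eqP-> /orP[]/eqP->; rewrite ?eqxx // e_sym.
Qed.

Lemma edge_diff (A B : edge_type e) : A != B -> exists2 x, x \in val A & x \notin val B.
Proof.
have card_edge (C : edge_type e) : #|val C| = 2.
  have [p [q [epq ->]]] := edgeP C; rewrite cards2.
  by case: eqVneq epq => // ->; rewrite e_irr.
move=> AB; apply/subsetPn; apply: contra AB => sAB.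
by apply/eqP/val_inj/eqP; rewrite eqEcard sAB !card_edge.
Qed.

Definition corona_col (v : corona_vertex) : 'I_(#|T| + n) :=
  match v with inl x => lshift n (enum_rank x) | inr (_, w) => rshift #|T| w end.

Lemma corona_col_inj_inl : {in is_inl &, injective corona_col}.
Proof. by move=> [x|//] [y|//] _ _ /= /lshift_inj/enum_rank_inj ->. Qed.

Lemma corona_col_classE x : color_class corona_col (corona_col (inl x)) = [set inl x].
Proof.
apply/setP => -[y|[B w]]; rewrite !inE /= ?eq_lshift ?eq_rlshift //.
by rewrite (inj_eq enum_rank_inj).
Qed.

Lemma corona_col_eq u v : corona_col u = corona_col v -> u != v ->
  exists A B w, [/\ u = inr (A, w), v = inr (B, w) & A != B].
Proof.
move=> /eqP; case: u => [x|[A w]]; case: v => [y|[B w']] /=;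
  rewrite ?eq_lshift ?eq_lrshift ?eq_rlshift ?eq_rshift ?(inj_eq enum_rank_inj) //.
  by move=> /eqP-> /negP.
by move=> /eqP-> uv; exists A, B, w'; split => //; apply: contraNneq uv => ->.
Qed.

Lemma corona_col_locating : locating corona corona_col.
Proof.
apply/locatingP => u v uv.
have [cuv|cuv] := eqVneq (corona_col u) (corona_col v); last first.
  by exists (corona_col u); apply: code_color_neq.
have [A [B [w [-> -> AB]]]] := corona_col_eq cuv uv; have [x xA xB] := edge_diff AB.
exists (corona_col (inl x)); rewrite corona_col_classE neq_ltn; apply/orP; left.
apply: leq_ltn_trans (_ : _ <= 1) _.
  by apply: (setdist_le1 (x := inl x)); rewrite ?set11.
apply: (setdist_gt1 (x0 := inl x)) => [|z]; first by rewrite set11.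
by rewrite inE => /eqP->.
Qed.

Hypothesis e_conn : connected e.

Lemma corona_walk_inl a v : exists p, [/\ path corona (inl a) p, last (inl a) p = v &
  {subset behead (belast (inl a) p) <= is_inl}].
Proof.
have tree_walk b : exists2 q, path corona (inl a) (map inl q) &
    last (inl a : corona_vertex) (map inl q) = inl b.
  have /connectP[q pq ->] := e_conn a b; exists q; last by rewrite last_map.
  by rewrite (mono_path (e := e)).
case: v => [b|[B w]].
  have [q pq lq] := tree_walk b; exists (map inl q); split=> //.
  by rewrite belast_map behead_map => z /mapP[? _ ->].
have [b bB] := edge_end B; have [q pq lq] := tree_walk b.
exists (rcons (map inl q) (inr (B, w))).
by rewrite rcons_path pq lq last_rcons belast_rcons; split=> // z /mapP[? _ ->].
Qed.

Lemma corona_walk u v : exists p, [/\ path corona u p, last u p = v &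
  {subset behead (belast u p) <= is_inl}].
Proof.
case: u => [a|[A w]]; first exact: corona_walk_inl.
have [a aA] := edge_end A; have [p [pp lp ip]] := corona_walk_inl a v.
exists (inl a :: p); split => //=; first by rewrite aA.
case: p {pp lp} ip => [_ z //|y p ip z /=].
by rewrite in_cons => /predU1P[-> //|/ip].
Qed.

Lemma corona_col_rainbow : rainbow_coloring corona corona_col.
Proof.
apply/rainbow_coloringP => u v; have [p [pp <- ip]] := corona_walk u v.
exact: rainbow_path_shorten pp (sub_in2 ip corona_col_inj_inl).
Qed.

Lemma rvcl_corona_le : rvcl corona <= #|T| + n.
Proof. exact/find_iota_le/has_rvcl_of/corona_col_locating/corona_col_rainbow. Qed.

End Corona.
Arguments corona {T} e n.

Section Restriction.
Variables (T : finType) (e : rel T) (n : nat).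
Hypothesis e_sym : symmetric e.

Definition get_inl (v : corona_vertex e n) : option T := if v is inl x then Some x else None.

Lemma get_inlK : ocancel get_inl inl.
Proof. by case. Qed.

(* Two tree vertices separated in a path only by vertices of one copy of K_n both lie on the
   edge of that copy, hence are adjacent. *)
Lemma path_pmap_get_inl (v0 : corona_vertex e n) x s :
  path (corona e n) v0 s -> (v0 = inl x \/ exists A w, v0 = inr (A, w) /\ x \in val A) ->
  inl x \notin s -> uniq s -> path e x (pmap get_inl s).
Proof.
elim: s v0 x => [//|v1 s IH] v0 x /= /andP[r01 ps] at_x.
rewrite in_cons negb_or => /andP[xv1 xs] /andP[v1s us].
case: v1 r01 ps xv1 v1s => [z|[B w']] r01 ps xv1 v1s /=.
  apply/andP; split; last by apply: (IH (inl z)) => //; left.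
  case: at_x => [E|[A [w [E xA]]]]; subst v0; first exact: r01.
  by apply: (edge_adj e_sym xA r01); apply: contra_neq xv1 => ->.
apply: (IH (inr (B, w'))) => //; right; exists B, w'; split => //.
case: at_x => [E|[A [w [E xA]]]]; subst v0; first exact: r01.
by move: r01 => /= /andP[/eqP <-].
Qed.

Lemma rainbow_path_restrict k (c : corona_vertex e n -> 'I_k) u v p :
  rainbow_path (corona e n) c (inl u) (inl v) p ->
  rainbow_path e (fun x => c (inl x)) u v (pmap get_inl p).
Proof.
case/lastP: p => [|s z]; first by case/and4P => _ /= /eqP[->]; rewrite /rainbow_path /= eqxx.
rewrite /rainbow_path last_rcons belast_rcons => /and4P[ps /eqP zv us cs]; subst z.
have /andP[u_notin s_uniq] := us.
have pmap_rcons : pmap get_inl (rcons s (inl v)) = rcons (pmap get_inl s) v.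
  by rewrite -cats1 pmap_cat cats1.
apply/and4P; split.
- by apply: (path_pmap_get_inl ps) u_notin s_uniq; left.
- by rewrite pmap_rcons last_rcons.
- by have := pmap_uniq get_inlK us.
rewrite pmap_rcons belast_rcons /=.
have -> : map (fun x => c (inl x)) (pmap get_inl s) = map c (map inl (pmap get_inl s)).
  by rewrite -map_comp.
by rewrite (pmap_filter get_inlK); apply: subseq_uniq cs; apply/map_subseq/filter_subseq.
Qed.

Lemma rainbow_coloring_restrict k (c : corona_vertex e n -> 'I_k) :
  rainbow_coloring (corona e n) c -> rainbow_coloring e (fun x => c (inl x)).
Proof.
move=> /rainbow_coloringP rb; apply/rainbow_coloringP => u v.
by have [p /rainbow_path_restrict rp] := rb (inl u) (inl v); exists (pmap get_inl p).
Qed.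

Lemma rvc_le_rvcl_corona : rvc e <= rvcl (corona e n).
Proof.
have [->|/existsP[c /andP[rb _]]] := rvclP (corona e n).
  by apply: leq_trans (rvc_le_card e) _; rewrite ltnS /corona_vertex card_sum leq_addr.
by apply: find_iota_le; apply: has_rvc_of (rainbow_coloring_restrict rb).
Qed.

End Restriction.

Section TreeLeaf.
Variables (T : finType) (e : rel T).

Lemma connected_edge : connected e -> 1 < #|T| -> exists x y, e x y.
Proof.
move=> e_conn /card_gt1P[u [v [_ _ uv]]]; have /connectP[[|z p] /= pp lp] := e_conn u v.
  by rewrite lp eqxx in uv.
by case/andP: pp => euz _; exists u, z.
Qed.

Hypotheses (e_sym : symmetric e) (e_irr : irreflexive e) (e_acyc : acyclic e).

Definition simple_path (s : seq T) : bool :=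
  uniq s && (if s is x :: s' then path e x s' else true).

Definition has_simple_path k : bool := [exists t : k.-tuple T, simple_path t].

Lemma has_simple_path_le k : has_simple_path k -> k <= #|T|.
Proof.
case/existsP => t /andP[ut _]; rewrite -(size_tuple t) -(card_uniqP ut).
exact: max_card.
Qed.

Lemma acyclic_no_chord z s w :
  uniq (z :: s) -> path e z s -> w \in s -> w != head z s -> ~~ e z w.
Proof.
move=> uzs pzs ws; move: uzs pzs; case/path.splitP: ws => p1 p2 uzs pzs wh.
have uc : uniq (z :: rcons p1 w) by move: uzs; rewrite -cat_cons cat_uniq => /andP[].
have sc : 2 < size (z :: rcons p1 w).
  by case: p1 {uzs pzs uc} wh => [|a p1] /=; rewrite ?eqxx // size_rcons.
apply: contra (e_acyc uc sc) => ezw.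
rewrite /= rcons_path last_rcons (e_sym w z) ezw andbT.
by move: pzs; rewrite cat_path => /andP[].
Qed.

Lemma tree_leaf z0 y0 : e z0 y0 -> exists x y, e x y /\ forall w, e x w -> w = y.
Proof.
move=> ez0.
have path2 : has_simple_path 2.
  have zy : z0 != y0 by apply: contraTneq ez0 => ->; rewrite e_irr.
  by apply/existsP; exists [tuple z0; y0]; rewrite /simple_path /= ez0 !inE zy.
case: (ex_maxnP (ex_intro _ 2 path2) has_simple_path_le) => k /existsP[t pt] kmax.
have k2 : 2 <= k by apply: kmax.
case: t pt => [[|z [|y p]] /= /eqP sz] pt; rewrite -sz // in k2.
move: pt; rewrite /simple_path => /andP[uzp pzp].
exists z, y; split=> [|w ezw]; first by case/andP: pzp.
apply/eqP/negPn/negP => wy.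
have [wp|wp] := boolP (w \in y :: p).
  by move: (acyclic_no_chord uzp pzp wp wy); rewrite ezw.
have wz : w != z by apply: contraTneq ezw => ->; rewrite e_irr.
have sz' : size [:: w, z, y & p] == k.+1 by rewrite /= sz.
suff /kmax : has_simple_path k.+1 by rewrite ltnn.
apply/existsP; exists (Tuple sz'); rewrite /simple_path [tval _]/=.
by rewrite cons_uniq uzp in_cons negb_or wz wp /= (e_sym w z) ezw.
Qed.

End TreeLeaf.

Section LeafClique.
Variables (T : finType) (e : rel T) (n : nat).
Hypotheses (e_sym : symmetric e) (e_irr : irreflexive e).
Variables x y : T.
Hypotheses (exy : e x y) (x_leaf : forall w, e x w -> w = y).

Lemma leaf_is_edge : is_edge e [set x; y].
Proof. by apply/existsP; exists x; apply/existsP; exists y; rewrite exy eqxx. Qed.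

Definition leaf_edge : edge_type e := exist _ [set x; y] leaf_is_edge.

Definition leaf_clique (o : option 'I_n) : corona_vertex e n :=
  if o is Some w then inr (leaf_edge, w) else inl x.

Definition leaf_nbhd (a : corona_vertex e n) : bool :=
  match a with inl b => (b == x) || (b == y) | inr (B, _) => B == leaf_edge end.

Lemma leaf_clique_inj : injective leaf_clique.
Proof. by case=> [w|] [w'|] //= [->]. Qed.

Lemma leaf_neq : x != y.
Proof. by apply: contraTneq exy => ->; rewrite e_irr. Qed.

Lemma mem_leaf_edge (B : edge_type e) : (x \in val B) = (B == leaf_edge).
Proof.
apply/idP/eqP => [xB|->]; last by rewrite /= !inE eqxx.
apply: val_inj; have [p [q [epq EB]]] := edgeP B; rewrite EB /=.
move: xB; rewrite EB !inE => /orP[]/eqP xpq; subst.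
  by rewrite (x_leaf epq).
by rewrite e_sym in epq; rewrite (x_leaf epq) setUC.
Qed.

Lemma corona_leaf_clique o a :
  corona e n (leaf_clique o) a = leaf_nbhd a && (a != leaf_clique o).
Proof.
case: o => [w|]; case: a => [b|[B w']] /=.
- by rewrite !inE andbT.
- rewrite /complete_rel; have [->|//] := eqVneq B leaf_edge.
  by rewrite (inj_eq (@inr_inj _ _)) xpair_eqE eqxx /= eq_sym.
- apply/idP/idP => [exb|/andP[/orP[]/eqP-> bx]].
  + by rewrite (x_leaf exb) eqxx orbT /= eq_sym leaf_neq.
  + by rewrite eqxx in bx.
  + exact: exy.
- by rewrite mem_leaf_edge andbT.
Qed.

Lemma locating_leaf_clique_inj k (c : corona_vertex e n -> 'I_k) :
  locating (corona e n) c -> injective (c \o leaf_clique).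
Proof.
move=> loc o o' /= co; apply/eqP/negPn/negP => oo.
have fo : leaf_clique o != leaf_clique o' by rewrite (inj_eq leaf_clique_inj).
have twins a : a != leaf_clique o -> a != leaf_clique o' ->
    corona e n (leaf_clique o) a = corona e n (leaf_clique o') a.
  by move=> ao ao'; rewrite !corona_leaf_clique ao ao'.
have := locating_twins (corona_sym (n := n) e_sym) (corona_irr (n := n) e_irr) loc fo twins.
by rewrite co eqxx.
Qed.

Lemma locating_leaf_ncolors k (c : corona_vertex e n -> 'I_k) :
  locating (corona e n) c -> n.+2 <= k.
Proof.
move=> loc; have cf_inj := locating_leaf_clique_inj loc.
have le_k : n.+1 <= k by have := leq_card _ cf_inj; rewrite card_option !card_ord.
rewrite ltn_neqAle le_k andbT; apply/eqP => kn.
have onto i : exists o, c (leaf_clique o) = i.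
  have card_le : #|'I_k| <= #|{: option 'I_n}| by rewrite card_option !card_ord kn.
  by case/codomP: (inj_card_onto cf_inj card_le i) => o ->; exists o.
have sees q : (forall o, q != leaf_clique o -> corona e n q (leaf_clique o)) ->
    sees_all_colors (corona e n) c q.
  move=> adj i; have [o co] := onto i; exists (leaf_clique o) => //.
  by have [->|/adj->] := eqVneq q (leaf_clique o); rewrite ?eqxx ?orbT.
have [o co] := onto (c (inl y)).
have yo : inl y != leaf_clique o.
  by case: o {co} => [w|] //=; apply: contra_neq leaf_neq => -[->].
have sees_y : sees_all_colors (corona e n) c (inl y).
  apply: sees => o' _; rewrite (corona_sym e_sym) corona_leaf_clique /= eqxx orbT /=.
  by case: o' => [w|] //=; rewrite eq_sym leaf_neq.
have sees_o : sees_all_colors (corona e n) c (leaf_clique o).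
  apply: sees => o' neq; rewrite corona_leaf_clique eq_sym neq andbT.
  by case: o' {neq} => [w|] /=; rewrite eqxx.
by have := locating_sees_all loc yo sees_y sees_o; rewrite co eqxx.
Qed.

Lemma rvcl_corona_ge : n + 2 <= rvcl (corona e n).
Proof.
rewrite addn2; have [->|/existsP[c /andP[_ loc]]] := rvclP (corona e n).
  by rewrite ltnS; have := leq_card _ leaf_clique_inj; rewrite card_option card_ord.
exact: locating_leaf_ncolors loc.
Qed.

End LeafClique.

Unset Implicit Arguments.

Theorem lemma5 (m n : nat) (T : finType) (e : rel T) :
  2 <= m -> 2 <= n -> #|T| = m -> simple_graph e -> is_tree e ->
  maxn (rvc e) (n + 2) <= rvcl (corona_rel e (complete_rel n)) <= 2 * m + n - 2.
Proof.
move=> m2 _ Tm [e_sym e_irr] [e_conn e_acyc]; subst m.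
have [z0 [y0 ez0]] := connected_edge e_conn m2.
have [x [y [exy x_leaf]]] := tree_leaf e_sym e_irr e_acyc ez0.
change (maxn (rvc e) (n + 2) <= rvcl (corona e n) <= 2 * #|T| + n - 2).
rewrite geq_max -andbA; apply/and3P; split.
- exact: rvc_le_rvcl_corona n e_sym.
- exact: (rvcl_corona_ge n e_sym e_irr exy).
- by apply: leq_trans (rvcl_corona_le n e_irr e_conn) _; lia.
Qed.
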